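(* Let $n,m\in\mathbb{N}$ and let $f:\mathbb{F}_2^n\to\mathbb{F}_2$ be $m$-bent. Run algorithm $\mathbb{A}^{(m)}(\mathrm{H}^{\otimes n})$ with $g=f$ and measure all $2n$ qubits. Then the probability of observing $\ket{0^n}\ket{0^n}$ is $2^{-n}$, and for every $\mathbf{x}\neq 0^n$ the probability of observing $\ket{\mathbf{x}}\ket{0^n}$ is $0$.
   Context: $\zeta_m=e^{2\pi i/m}$, $\overline{\zeta_m}$ its conjugate; $wt$ is Hamming weight; $\mathbf{x}\cdot\mathbf{y}=\bigoplus_i x_iy_i$. $f$ is $m$-bent if $|\mathcal{H}^{(m)}_f(\boldsymbol{\omega})|=1$ for all $\boldsymbol{\omega}$, where $\mathcal{H}^{(m)}_f(\boldsymbol{\omega})=2^{-n/2}\sum_{\mathbf{x}}(-1)^{f(\mathbf{x})\oplus\mathbf{x}\cdot\boldsymbol{\omega}}\zeta_m^{wt(\mathbf{x})}$. Gates: $\mathrm{H}$ Hadamard; $\Omega_m=\frac{1}{\sqrt2}\begin{pmatrix}1&\zeta_m\\1&-\zeta_m\end{pmatrix}$; $\overline{\Omega}_m=\frac{1}{\sqrt2}\begin{pmatrix}1&\overline{\zeta_m}\\1&-\overline{\zeta_m}\end{pmatrix}$; $U_f$ is the phase oracle $\ket{\mathbf{x}}\mapsto(-1)^{f(\mathbf{x})}\ket{\mathbf{x}}$. Algorithm $\mathbb{A}^{(m)}(\mathrm{C}_n)$ (with functions $f,g$): two $n$-qubit registers start in $\ket{0^n}\ket{0^n}$; apply $\mathrm{C}_n$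 to the first register; then apply to the second register in order $\mathrm{H}^{\otimes n}$, $U_f$, $\Omega_m^{\otimes n}$, then the two-register gate $\ket{\mathbf{y}}\ket{\mathbf{x}}\mapsto(-1)^{\mathbf{x}\cdot\mathbf{y}}\ket{\mathbf{y}}\ket{\mathbf{x}}$, then $\mathrm{H}^{\otimes n}$, $U_g$, $\overline{\Omega}_m^{\otimes n}$ on the second register; finally measure both registers. *)

From HB Require Import structures.
From mathcomp Require Import all_boot all_order all_algebra.
From mathcomp Require Import all_classical all_reals all_analysis.
From mathcomp Require Import complex.
Set Implicit Arguments. Unset Strict Implicit. Unset Printing Implicit Defensive.
Import Order.TTheory GRing.Theory Num.Theory.
Local Open Scope ring_scope.

Section Quantum.
Variable R : realType.
Local Notation C := R[i].

Definition bv (n : nat) := {ffun 'I_n -> bool}.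
Definition zero_bv (n : nat) : bv n := [ffun => false].

Definition wt n (x : bv n) : nat := \sum_(i < n) (x i : nat).
Definition dotb n (x y : bv n) : bool := \big[addb/false]_(i < n) (x i && y i).

Definition sgn (b : bool) : C := if b then -1 else 1.

Definition zeta (m : nat) : C :=
  (cos (2 * pi / m%:R) +i* sin (2 * pi / m%:R))%C.
Definition zetabar (m : nat) : C :=
  (cos (2 * pi / m%:R) -i* sin (2 * pi / m%:R))%C.

Definition isq2 : C := ((Num.sqrt (2 : R))^-1)%:C%C.

Definition Hm (m n : nat) (f : bv n -> bool) (w : bv n) : C :=
  isq2 ^+ n * \sum_(x : bv n) sgn (f x (+) dotb x w) * zeta m ^+ wt x.
Definition mbent (m n : nat) (f : bv n -> bool) : Prop :=
  forall w : bv n, ComplexField.Normc.normc (Hm m f w) = 1.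

(* single-qubit gates as matrices U out in *)
Definition Hgate (r c : bool) : C := isq2 * sgn (r && c).
Definition Omega (z : C) (r c : bool) : C :=
  isq2 * (if c then (if r then - z else z) else 1).
(* Omega_m = Omega (zeta m), Omegabar_m = Omega (zetabar m) *)

Definition tens n (U : bool -> bool -> C) (y x : bv n) : C :=
  \prod_(i < n) U (y i) (x i).

(* two-register states: psi y x = amplitude of |y>|x> *)
Definition state n := bv n -> bv n -> C.

Definition init (n : nat) : state n :=
  fun y x => if (y == zero_bv n) && (x == zero_bv n) then 1 else 0.
Definition app1 n (M : bv n -> bv n -> C) (psi : state n) : state n :=
  fun y x => \sum_(y' : bv n) M y y' * psi y' x.
Definition app2 n (M : bv n -> bv n -> C) (psi : state n) : state n :=
  fun y x => \sum_(x' : bv n) M x x' * psi y x'.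
Definition oracle2 n (f : bv n -> bool) (psi : state n) : state n :=
  fun y x => sgn (f x) * psi y x.
Definition cphase n (psi : state n) : state n :=
  fun y x => sgn (dotb x y) * psi y x.

Definition algA (m n : nat) (Cn : bv n -> bv n -> C) (f g : bv n -> bool)
  : state n :=
  let s1 := app1 Cn (@init n) in
  let s2 := app2 (tens Hgate) s1 in
  let s3 := oracle2 f s2 in
  let s4 := app2 (tens (Omega (zeta m))) s3 in
  let s5 := cphase s4 in
  let s6 := app2 (tens Hgate) s5 in
  let s7 := oracle2 g s6 in
  app2 (tens (Omega (zetabar m))) s7.

Definition prob n (psi : state n) (y x : bv n) : R :=
  ComplexField.Normc.normc (psi y x) ^+ 2.

End Quantum.

From HB Require Import structures.
From mathcomp Require Import all_boot all_order all_algebra.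
From mathcomp Require Import all_classical all_reals all_analysis.
From mathcomp Require Import complex.
From mathcomp Require Import ring.
Import Order.TTheory GRing.Theory Num.Theory.
Local Open Scope ring_scope.

(* Hadamard on the first register leaves it uniform, and H, U_f, Omega_m on
   the second turn |0^n> into 2^{-n/2} sum_w H_f(w) |w>.  Since the first row
   of Omegabar_m is the conjugate of that of Omega_m, projecting the remaining
   gates onto |0^n> in the second register gives the amplitude of |y>|0^n> as
   2^{-3n/2} sum_w (-1)^{w.y} H_f(w) conj(H_g(w)).  For g = f m-bent every term
   H_f(w) conj(H_f(w)) is 1, and the character sum sum_w (-1)^{w.y} is 2^n at
   y = 0 and vanishes otherwise. *)

Section Algorithm.
Variables (R : realType) (n : nat).
Local Notation C := R[i].
Local Notation sgn := (@sgn R).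
Local Notation s := (@isq2 R).
Local Notation z0 := (zero_bv n).
Local Notation Hn := (tens (Hgate R)).

Lemma sgn_addb a b : sgn (a (+) b) = sgn a * sgn b.
Proof. by case: a; case: b; rewrite /sgn /= ?mulN1r ?mul1r ?opprK ?mulr1. Qed.

Lemma prod_sgn (F : 'I_n -> bool) :
  \prod_(i < n) sgn (F i) = sgn (\big[addb/false]_(i < n) F i).
Proof. by rewrite (big_morph sgn sgn_addb (erefl (sgn false))). Qed.

Lemma conjc_sgn b : (sgn b)^*%C = sgn b.
Proof. by case: b; rewrite /sgn /=; apply/eqP; rewrite eq_complex /= ?oppr0 ?opprK ?eqxx. Qed.

Lemma conjc_isq2 : s^*%C = s.
Proof. exact: conjc_real. Qed.

Lemma dotbC (x y : bv n) : dotb x y = dotb y x.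
Proof. by apply: eq_bigr => i _; rewrite andbC. Qed.

Lemma dotbv0 (x : bv n) : dotb x z0 = false.
Proof. by rewrite /dotb big1 // => i _; rewrite ffunE andbF. Qed.

Lemma tens_Hgate (y x : bv n) : Hn y x = s ^+ n * sgn (dotb y x).
Proof. by rewrite /tens /Hgate big_split /= prodr_const card_ord prod_sgn. Qed.

Lemma tens_Omega (z : C) (y x : bv n) :
  tens (Omega z) y x = s ^+ n * (z ^+ wt x * sgn (dotb y x)).
Proof.
rewrite /tens /Omega (eq_bigr (fun i => s * (z ^+ (x i : nat) * sgn (y i && x i)))).
  by rewrite big_split /= prodr_const card_ord big_split /= prodrXr prod_sgn.
by move=> i _; case: (x i); case: (y i); rewrite /sgn /= ?expr1 ?expr0 ?mulr1 ?mulrN1.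
Qed.

Definition flip (i : 'I_n) (x : bv n) : bv n :=
  [ffun j => if j == i then ~~ x j else x j].

Lemma flipK i : involutive (flip i).
Proof. by move=> x; apply/ffunP => j; rewrite !ffunE; case: (j == i); rewrite ?negbK. Qed.

Lemma dotb_flip i (x y : bv n) : y i -> dotb (flip i x) y = ~~ dotb x y.
Proof.
move=> yi; rewrite /dotb (bigD1 i) //= [in RHS](bigD1 i) //= !ffunE eqxx yi !andbT.
rewrite (eq_bigr (fun j => x j && y j)) => [|j /negbTE nji]; last by rewrite ffunE nji.
by case: (x i); rewrite /= ?negbK.
Qed.

(* Flipping a bit on which [y] is set is a sign-reversing involution. *)
Lemma sum_sgn_dotb (y : bv n) :
  \sum_(x : bv n) sgn (dotb x y) = if y == z0 then (2 ^ n)%:R else 0.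
Proof.
have [->|ny] := eqVneq y z0.
  under eq_bigr do rewrite dotbv0.
  by rewrite sumr_const card_ffun card_bool card_ord.
have [i yi] : exists i, y i.
  apply/existsP; apply: contraNT ny; rewrite negb_exists => /forallP y0.
  by apply/eqP/ffunP => j; rewrite ffunE; apply/negbTE/y0.
set S := \sum_x _.
have SN : S = - S.
  rewrite {1}/S (reindex_inj (inv_inj (flipK i))) /= -sumrN.
  by apply: eq_bigr => x _; rewrite dotb_flip //; case: (dotb x y); rewrite /sgn ?opprK.
have : S *+ 2 == 0 by rewrite mulr2n {1}SN addNr.
by rewrite mulrn_eq0 => /eqP.
Qed.

Lemma normc1_mulr_conjc (w : C) : ComplexField.Normc.normc w = 1 -> w * w^*%C = 1.
Proof. by move=> w1; rewrite -sqr_normc normc_def; case: w w1 => a b /= ->; rewrite expr1n. Qed.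

Variable m : nat.

Lemma conjc_Hm (f : bv n -> bool) w : (Hm R m f w)^*%C =
  s ^+ n * \sum_(x : bv n) sgn (f x (+) dotb x w) * zetabar R m ^+ wt x.
Proof.
rewrite /Hm rmorphM rmorphXn rmorph_sum; congr (_ ^+ _ * _); first exact: conjc_isq2.
by apply: eq_bigr => x _; rewrite rmorphM rmorphXn; congr (_ * _ ^+ _); exact: conjc_sgn.
Qed.

Lemma app1_Hn_init :
  app1 Hn (@init R n) = fun _ x => if x == z0 then s ^+ n else 0.
Proof.
apply: boolp.funext => y; apply: boolp.funext => x; rewrite /app1 /init.
case: eqP => _; last by rewrite big1 // => y' _; rewrite andbF mulr0.
rewrite (bigD1 z0) //= eqxx tens_Hgate dotbv0 !mulr1 big1 ?addr0 // => y' /negbTE->.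
by rewrite mulr0.
Qed.

Lemma app2_Hn_delta0 (c : C) :
  app2 Hn (fun _ x => if x == z0 then c else 0) = fun _ _ => s ^+ n * c.
Proof.
apply: boolp.funext => y; apply: boolp.funext => x; rewrite /app2.
rewrite (bigD1 z0) //= eqxx tens_Hgate dotbv0 mulr1 big1 ?addr0 // => x' /negbTE->.
exact: mulr0.
Qed.

Lemma app2_Omega_oracle (f : bv n -> bool) (c : C) :
  app2 (tens (Omega (zeta R m))) (oracle2 f (fun _ _ => c)) =
  fun _ w => c * Hm R m f w.
Proof.
apply: boolp.funext => y; apply: boolp.funext => w; rewrite /app2 /oracle2 /Hm.
rewrite !mulr_sumr; apply: eq_bigr => x _.
rewrite tens_Omega sgn_addb (dotbC x w); ring.
Qed.

Lemma algA_Hn_amplitude (f g : bv n -> bool) (y : bv n) :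
  algA m Hn f g y z0 =
  s ^+ n * s ^+ n * s ^+ n *
    \sum_(w : bv n) sgn (dotb w y) * (Hm R m f w * (Hm R m g w)^*%C).
Proof.
rewrite /algA /= app1_Hn_init app2_Hn_delta0 app2_Omega_oracle /app2 /oracle2 /cphase.
under eq_bigr do rewrite !mulr_sumr.
rewrite exchange_big /= mulr_sumr; apply: eq_bigr => w _.
rewrite conjc_Hm !mulr_sumr; apply: eq_bigr => x _.
rewrite tens_Omega tens_Hgate (dotbC z0) dotbv0 sgn_addb mulr1; ring.
Qed.

Lemma isq2_sqr_mul2 : s ^+ 2 * 2%:R = 1.
Proof.
rewrite /isq2 -rmorphXn -(rmorph_nat (real_complex R)) -rmorphM /=.
by rewrite exprVn sqr_sqrtr ?ler0n // mulVf ?pnatr_eq0.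
Qed.

Lemma algA_Hn_bent_amplitude (f : bv n -> bool) (y : bv n) :
  mbent R m f -> algA m Hn f f y z0 = if y == z0 then s ^+ n else 0.
Proof.
move=> bent; rewrite algA_Hn_amplitude.
under eq_bigr do rewrite normc1_mulr_conjc ?bent // mulr1.
rewrite sum_sgn_dotb; case: eqP => _; last by rewrite mulr0.
by rewrite natrX -!mulrA -2!exprMn mulrA -expr2 isq2_sqr_mul2 expr1n mulr1.
Qed.

Lemma normc_isq2X_sqr : ComplexField.Normc.normc (s ^+ n) ^+ 2 = 2%:R ^- n.
Proof.
rewrite /isq2 -rmorphXn /= expr0n /= addr0 sqr_sqrtr ?sqr_ge0 //.
by rewrite -exprM mulnC exprM exprVn sqr_sqrtr ?ler0n // exprVn.
Qed.

End Algorithm.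

Theorem corollary4 (R : realType) (n m : nat) (f : bv n -> bool) :
  mbent R m f ->
  prob (algA m (tens (Hgate R)) f f) (zero_bv n) (zero_bv n)
    = (2%:R ^- n : R) /\
  (forall x : bv n, x != zero_bv n ->
     prob (algA m (tens (Hgate R)) f f) x (zero_bv n) = 0).
Proof.
move=> bent; split => [|x nx]; rewrite /prob algA_Hn_bent_amplitude //.
  by rewrite eqxx normc_isq2X_sqr.
by rewrite (negbTE nx) ComplexField.Normc.normc0 expr0n.
Qed.
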